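(* Let $M$ be a matroid on $E$ and $\mathfrak{A}\subseteq\mathfrak{S}\subseteq\mathcal{P}(E)$. If $a_{\mathfrak{S}}(A)=0$ for every $A\in\mathfrak{A}$, then $\mathrm{ec}_{\mathfrak{S}-\mathfrak{A}}(M)=\mathrm{ec}_{\mathfrak{S}}(M)$. Likewise, if $b_{\mathfrak{S}}(A)=0$ for every $A\in\mathfrak{A}$, then $\mathrm{ec}_{\mathfrak{S}-\mathfrak{A}}(M)=\mathrm{ec}_{\mathfrak{S}}(M)$.
   Context: $M$ has rank $k$. For $\mathfrak{T}\subseteq\mathcal{P}(E)$, viewed as a poset under inclusion with Möbius function $\mu_{\mathfrak{T}}$: $c(T)=\#T-\mathrm{rk}\,T$; $a_{\mathfrak{T}}(S)=c(S)-\sum_{T\in\mathfrak{T},T\subsetneq S}a_{\mathfrak{T}}(T)$ recursively; $b_{\mathfrak{T}}(T)=\sum_{S\in\mathfrak{T}}(k-\mathrm{rk}\,S)\mu_{\mathfrak{T}}(T,S)$; $\mathrm{ec}_{\mathfrak{T}}(M)=\sum_{S\in\mathfrak{T}}(k-\mathrm{rk}\,S)a_{\mathfrak{T}}(S)$. *)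

From mathcomp Require Import all_boot all_order all_algebra.
Set Implicit Arguments. Unset Strict Implicit. Unset Printing Implicit Defensive.
Import GRing.Theory Num.Theory.
Local Open Scope ring_scope.

Record matroid (E : finType) := Matroid {
  rk : {set E} -> nat;
  rk_card : forall A : {set E}, (rk A <= #|A|)%N;
  rk_mono : forall A B : {set E}, A \subset B -> (rk A <= rk B)%N;
  rk_submod : forall A B : {set E},
      (rk (A :|: B) + rk (A :&: B) <= rk A + rk B)%N
}.

Section Defs.
Variables (E : finType) (M : matroid E).

Definition mrank : nat := rk M [set: E].

Definition cdef (T : {set E}) : int := (#|T|)%:Z - (rk M T)%:Z.

Variable F : {set {set E}}.

(* a_F(S) = c(S) - sum_{T in F, T proper subset of S} a_F(T), by recursion
   with fuel (proper subsets have strictly smaller cardinality). *)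
Fixpoint a_aux (n : nat) (S : {set E}) : int :=
  if n is n'.+1 then
    cdef S - \sum_(T in F | T \proper S) a_aux n' T
  else 0.

Definition a_fam (S : {set E}) : int := a_aux (#|S|).+1 S.

Fixpoint mu_aux (n : nat) (x y : {set E}) : int :=
  if n is n'.+1 then
    if x == y then 1
    else if x \proper y then
      - \sum_(z in F | (x \subset z) && (z \proper y)) mu_aux n' x z
    else 0
  else 0.

Definition mobius (x y : {set E}) : int := mu_aux (#|y|).+1 x y.

Definition b_fam (T : {set E}) : int :=
  \sum_(S in F) ((mrank)%:Z - (rk M S)%:Z) * mobius T S.

Definition ec : int :=
  \sum_(S in F) ((mrank)%:Z - (rk M S)%:Z) * a_fam S.

End Defs.

From mathcomp Require Import all_boot all_order all_algebra.
Set Implicit Arguments. Unset Strict Implicit. Unset Printing Implicit Defensive.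
Import GRing.Theory Num.Theory.
Local Open Scope ring_scope.

(* For the a-hypothesis, the sets of A do not contribute to the recursion defining
   a_S, so a_{S-A} agrees with a_S and the summands of ec_S indexed by A vanish.
   For the b-hypothesis, Möbius inversion on (S, \subset) writes the corank
   k - rk T as the sum of b_S(U) over U \supseteq T in S; substituting this into
   ec and using c(U) = \sum_{T \subseteq U} a(T) gives
   ec_G = \sum_{U in G} b_S(U) c(U) whenever b_S vanishes on S - G. *)

Lemma kernel_inv_sym (R : comUnitRingType) (T : finType) (f g : T -> T -> R) :
  (forall x y, \sum_z f x z * g z y = (x == y)%:R) ->
  forall x y, \sum_z g x z * f z y = (x == y)%:R.
Proof.
move=> fg x y.
pose mx (h : T -> T -> R) : 'M[R]_#|T| := \matrix_(i, j) h (enum_val i) (enum_val j).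
have mulmx_kernel h k i j :
    (mx h *m mx k) i j = \sum_z h (enum_val i) z * k z (enum_val j).
  by rewrite !mxE (big_enum_val (fun z => h _ z * k z _)); apply: eq_bigr => l _; rewrite !mxE.
have mx_fg : mx f *m mx g = 1%:M.
  by apply/matrixP => i j; rewrite mulmx_kernel fg !mxE (inj_eq enum_val_inj).
have /matrixP/(_ (enum_rank x) (enum_rank y)) := mulmx1C mx_fg.
by rewrite mulmx_kernel !enum_rankK !mxE (inj_eq enum_rank_inj).
Qed.

Lemma sum_setD_vanishing (R : nmodType) (I : finType) (A B : {set I}) (f : I -> R) :
  A \subset B -> {in A, f =1 fun=> 0} -> \sum_(i in B :\: A) f i = \sum_(i in B) f i.
Proof.
by move=> AB fA0; rewrite [RHS](big_setID A) (setIidPr AB) /= [X in X + _]big1 ?add0r.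
Qed.

Section Mobius.
Variables (E : finType) (F : {set {set E}}).
Implicit Types x y z : {set E}.

Lemma mu_aux_fuel x n m y : (#|y| < n)%N -> (#|y| < m)%N -> mu_aux F n x y = mu_aux F m x y.
Proof.
elim: n m y => [|n IH] [|m] y //= yn ym.
case: (x == y) => //; case: (x \proper y) => //.
congr (- _); apply: eq_bigr => z /and3P [_ _ /proper_card zy].
by apply: IH; apply: leq_trans zy _; rewrite -ltnS.
Qed.

Lemma mobiusE x y : mobius F x y =
  if x == y then 1 else if x \proper y then
    - \sum_(z in F | (x \subset z) && (z \proper y)) mobius F x z else 0.
Proof.
rewrite [LHS]/mobius /=; case: (x == y) => //; case: (x \proper y) => //.
congr (- _); apply: eq_bigr => z /and3P [_ _ /proper_card zy].
exact: mu_aux_fuel.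
Qed.

Lemma mobius_eq0 x y : ~~ (x \subset y) -> mobius F x y = 0.
Proof.
move=> xNy; rewrite mobiusE; case: eqP => [exy|_]; first by rewrite exy subxx in xNy.
by case: ifP => // /properP [xy _]; rewrite xy in xNy.
Qed.

Lemma mobius_diag x : mobius F x x = 1.
Proof. by rewrite mobiusE eqxx. Qed.

Lemma sum_mobius_left x y : x \in F -> y \in F ->
  \sum_(z in F | z \subset y) mobius F x z = (x == y)%:R.
Proof.
move=> xF yF; have [xy|xNy] := boolP (x \subset y); last first.
  rewrite big1 => [|z /andP [_ zy]].
    by case: eqVneq xNy => [->|]; rewrite ?subxx.
  by apply: mobius_eq0; apply: contra xNy => /subset_trans; apply.
rewrite (bigD1 y) /=; last by rewrite yF subxx.
have [<-|neq_xy] := eqVneq x y.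
  rewrite mobius_diag big1 ?addr0 // => z /andP [/andP [_ zx] nzx].
  by apply: mobius_eq0; apply: contra nzx => xz; rewrite eqEsubset zx.
have pxy : x \proper y by rewrite properEneq neq_xy.
rewrite (mobiusE x y) (negbTE neq_xy) pxy addrC; apply/eqP; rewrite subr_eq0; apply/eqP.
rewrite big_mkcond [RHS]big_mkcond; apply: eq_bigr => z _.
rewrite properEneq; case: (z \in F) => //=.
have [xz|xNz] := boolP (x \subset z); first by rewrite andbC.
by rewrite mobius_eq0 //; case: ifP.
Qed.

(* Extended by the identity off F, so that the Möbius and zeta functions become
   kernels on all of {set E} and [kernel_inv_sym] applies. *)
Definition mobius_ext x y : int :=
  if (x \in F) && (y \in F) then mobius F x y else (x == y)%:R.

Definition zeta_ext x y : int :=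
  if (x \in F) && (y \in F) then (x \subset y)%:R else (x == y)%:R.

Lemma mobius_zeta_ext x y : \sum_z mobius_ext x z * zeta_ext z y = (x == y)%:R.
Proof.
rewrite /mobius_ext /zeta_ext; have [xF|xNF] := boolP (x \in F); last first.
  rewrite (bigD1 x) //= eqxx mul1r (negbTE xNF) big1 ?addr0 // => z nzx.
  by rewrite /= eq_sym (negbTE nzx) mul0r.
have [yF|yNF] := boolP (y \in F); last first.
  rewrite (bigD1 y) //= (negbTE yNF) !andbF eqxx mulr1 big1 ?addr0 // => z nzy.
  by rewrite andbF (negbTE nzy) mulr0.
rewrite -(sum_mobius_left xF yF) big_mkcond [RHS]big_mkcond.
apply: eq_bigr => z _; have [zF|zNF] /= := boolP (z \in F); last first.
  have /negbTE-> : x != z by apply: contraNneq zNF => <-.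
  by rewrite mul0r.
by case: (z \subset y); rewrite ?mulr1 ?mulr0.
Qed.

Lemma sum_mobius_right x y : x \in F -> y \in F ->
  \sum_(z in F | x \subset z) mobius F z y = (x == y)%:R.
Proof.
move=> xF yF; rewrite -(kernel_inv_sym mobius_zeta_ext x y) big_mkcond /=.
apply: eq_bigr => z _; rewrite /zeta_ext /mobius_ext xF yF.
have [zF|zNF] /= := boolP (z \in F); last first.
  have /negbTE-> : x != z by apply: contraNneq zNF => <-.
  by rewrite mul0r.
by case: (x \subset z); rewrite ?mul1r ?mul0r.
Qed.

End Mobius.

Section EulerCharacteristic.
Variables (E : finType) (M : matroid E).
Implicit Types (S T U : {set E}) (F G : {set {set E}}).

Definition corank S : int := (mrank M)%:Z - (rk M S)%:Z.

Lemma a_aux_fuel F n m S : (#|S| < n)%N -> (#|S| < m)%N ->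
  a_aux M F n S = a_aux M F m S.
Proof.
elim: n m S => [|n IH] [|m] S //= Sn Sm.
congr (_ - _); apply: eq_bigr => T /andP [_ /proper_card TS].
by apply: IH; apply: leq_trans TS _; rewrite -ltnS.
Qed.

Lemma a_famE F S :
  a_fam M F S = cdef M S - \sum_(T in F | T \proper S) a_fam M F T.
Proof.
rewrite [LHS]/a_fam /=; congr (_ - _); apply: eq_bigr => T /andP [_ /proper_card TS].
exact: a_aux_fuel.
Qed.

Lemma cdef_sum_a F S : S \in F -> cdef M S = \sum_(T in F | T \subset S) a_fam M F T.
Proof.
move=> SF; rewrite (bigD1 S) /=; last by rewrite SF subxx.
rewrite a_famE [X in _ = _ + X](eq_bigl (fun T => (T \in F) && (T \proper S))) ?subrK //.
by move=> T; case: (T \in F) => //=; rewrite properEneq andbC.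
Qed.

Lemma a_fam_subfamily F G : G \subset F ->
  {in F :\: G, forall X, a_fam M F X = 0} -> a_fam M G =1 a_fam M F.
Proof.
move=> GF aF0 S; elim: {S}#|S|.+1 {-2}S (ltnSn #|S|) => // n IH S Sn.
rewrite a_famE [RHS]a_famE; congr (_ - _).
rewrite big_mkcond [RHS]big_mkcond; apply: eq_bigr => T _.
have [TG|TNG] := boolP (T \in G).
  rewrite (subsetP GF _ TG); case: ifP => // /proper_card TS.
  by apply: IH; apply: leq_trans TS _; rewrite -ltnS.
case TF: (T \in F) => //; case: ifP => // _.
by rewrite aF0 // in_setD TNG TF.
Qed.

Lemma corank_sum_b F T : T \in F -> corank T = \sum_(U in F | T \subset U) b_fam M F U.
Proof.
move=> TF; rewrite /b_fam exchange_big /= (bigD1 T TF) /= [X in _ + X]big1 ?addr0.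
  by rewrite -mulr_sumr sum_mobius_right // eqxx mulr1.
move=> S /andP [SF nST]; rewrite -mulr_sumr sum_mobius_right //.
by rewrite eq_sym (negbTE nST) mulr0.
Qed.

Lemma ec_sum_b F G : G \subset F ->
  {in F :\: G, forall X, b_fam M F X = 0} ->
  ec M G = \sum_(U in G) b_fam M F U * cdef M U.
Proof.
move=> GF bF0.
have corankG T : T \in G -> corank T = \sum_(U in G | T \subset U) b_fam M F U.
  move=> TG; rewrite (corank_sum_b (subsetP GF _ TG)) big_mkcond [RHS]big_mkcond.
  apply: eq_bigr => U _; have [UG|UNG] := boolP (U \in G).
    by rewrite (subsetP GF _ UG).
  by case UF: (U \in F) => //; case: ifP => // _; rewrite bF0 // in_setD UNG UF.
rewrite /ec; under eq_bigr => T TG do rewrite -/(corank T) (corankG T TG) mulr_suml.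
rewrite (exchange_big_dep (mem G)) /= => [|_ U _ /andP [] //].
apply: eq_bigr => U UG; rewrite (cdef_sum_a UG) mulr_sumr.
by apply: eq_bigl => T; rewrite UG.
Qed.

End EulerCharacteristic.

Theorem corollary6p4 (E : finType) (M : matroid E) (A S : {set {set E}}) :
  A \subset S ->
  ((forall X, X \in A -> a_fam M S X = 0) -> ec M (S :\: A) = ec M S) /\
  ((forall X, X \in A -> b_fam M S X = 0) -> ec M (S :\: A) = ec M S).
Proof.
move=> AS; have SAS : S :\: A \subset S by apply: subsetDl.
have diffA X : X \in S :\: (S :\: A) -> X \in A.
  by rewrite !in_setD negb_and negbK => /andP [/orP [|/negP]].
split=> H0.
  have a_eq := a_fam_subfamily SAS (fun X XD => H0 X (diffA X XD)).
  rewrite /ec; under eq_bigr do rewrite a_eq.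
  by apply: sum_setD_vanishing => // X XA; rewrite H0 // mulr0.
rewrite (ec_sum_b SAS (fun X XD => H0 X (diffA X XD))) (ec_sum_b (subxx S)).
  by apply: sum_setD_vanishing => // X XA; rewrite H0 // mul0r.
by move=> X; rewrite setDv inE.
Qed.
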